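(* Let $\phi$ be a good potential on $\mathcal D$ with $\phi>0$, total potential $\Phi$. Let $\boldsymbol x\in\mathcal D^N$, $t>0$, $\boldsymbol p\in\Delta^{N-1}$ with $p_i\propto\partial_x\phi(x_i,t)$ (arbitrary if all these vanish), $\boldsymbol\ell\in\mathbb{R}^N$, $\Delta x_i=\langle\boldsymbol p,\boldsymbol\ell\rangle-\ell_i$, $\Delta t\ge0$, $(\boldsymbol x',t')=(\boldsymbol x+\Delta\boldsymbol x,t+\Delta t)$ and $\boldsymbol\Delta=(\Delta\boldsymbol x,\Delta t)\in\mathbb{R}^{N+1}$. Then there is a point $(\bar{\boldsymbol x},\bar t)$ on the line segment between $(\boldsymbol x,t)$ and $(\boldsymbol x',t')$ such that $$\log\Phi(\boldsymbol x',t')-\log\Phi(\boldsymbol x,t)=-\frac{\sum_{i=1}^N\partial_{xx}\phi(x_i,t)\,\Delta t}{2\,\Phi(\boldsymbol x,t)}+\frac12\nabla^2\log\Phi(\bar{\boldsymbol x},\bar t)[\boldsymbol\Delta,\boldsymbol\Delta].$$ In particular, if $\log\Phi(\boldsymbol x',t')=\log\Phi(\boldsymbol x,t)$, then $$\Delta t=\frac{\Phi(\boldsymbol x,t)\,\nabla^2\log\Phi(\bar{\boldsymbol x},\bar t)[\boldsymbol\Delta,\boldsymbol\Delta]}{\sum_{i=1}^N\partial_{xx}\phi(x_i,t)}.$$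
   Context: Good potential: let $\mathcal D=\mathbb{R}$ or $\mathcal D=[y_0,\infty)$, with Euclidean projection $\Pi_{\mathcal D}$. A function $\phi:\mathbb{R}\times[0,\infty)\to\mathbb{R}$ is a good potential on $\mathcal D$ if (1) it is jointly strictly convex, (2) three times differentiable, (3) $\partial_y\phi\ge0$, (4) $\partial_t\phi\le0$, (5) $\lim_{t\to\infty}\phi(y,t)=\inf_{y,t}\phi(y,t)\ge0$, (6) $\phi(\Pi_{\mathcal D}(y),t)\le\phi(y,t)$ for all $y$, and (7) $\partial_t\phi=-\tfrac12\partial_{yy}\phi$. Total potential $\Phi(\boldsymbol x,t)=\sum_{i=1}^N\phi(x_i,t)$. For a twice differentiable $f$, $\nabla^2 f(\boldsymbol z)[\boldsymbol a,\boldsymbol b]=\boldsymbol a^{\mathsf T}\nabla^2 f(\boldsymbol z)\boldsymbol b$. *)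

From Stdlib Require Import Reals.
From Coquelicot Require Import Coquelicot.
Open Scope R_scope.

Fixpoint sumR (N : nat) (f : nat -> R) : R :=
  match N with O => 0 | S n => sumR n f + f n end.

(* The domain D : None = R,  Some y0 = [y0, +oo) *)
Definition inD (D : option R) (y : R) : Prop :=
  match D with None => True | Some y0 => y0 <= y end.
Definition projD (D : option R) (y : R) : R :=
  match D with None => y | Some y0 => Rmax y0 y end.

Definition dy (f : R -> R -> R) : R -> R -> R := fun y t => Derive (fun u => f u t) y.
Definition dt (f : R -> R -> R) : R -> R -> R := fun y t => Derive (fun s => f y s) t.

Definition thrice_diff (f : R -> R -> R) : Prop :=
  forall y t, 0 < t ->
    differentiable_pt f y t /\
    differentiable_pt (dy f) y t /\ differentiable_pt (dt f) y t /\
    differentiable_pt (dy (dy f)) y t /\ differentiable_pt (dy (dt f)) y t /\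
    differentiable_pt (dt (dy f)) y t /\ differentiable_pt (dt (dt f)) y t.

Definition good_potential (D : option R) (phi : R -> R -> R) : Prop :=
  (forall y1 t1 y2 t2 lam, 0 <= t1 -> 0 <= t2 -> (y1 <> y2 \/ t1 <> t2) ->
      0 < lam < 1 ->
      phi (lam * y1 + (1 - lam) * y2) (lam * t1 + (1 - lam) * t2)
        < lam * phi y1 t1 + (1 - lam) * phi y2 t2) /\
  thrice_diff phi /\
  (forall y t, 0 < t -> 0 <= dy phi y t) /\
  (forall y t, 0 < t -> dt phi y t <= 0) /\
  (exists m : R, 0 <= m /\
     (forall y t, 0 <= t -> m <= phi y t) /\
     (forall eps, 0 < eps -> exists y t, 0 <= t /\ phi y t < m + eps) /\
     (forall y, is_lim (fun t => phi y t) p_infty m)) /\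
  (forall y t, 0 <= t -> phi (projD D y) t <= phi y t) /\
  (forall y t, 0 < t -> dt phi y t = - / 2 * dy (dy phi) y t).

Definition Phi (N : nat) (phi : R -> R -> R) (x : nat -> R) (t : R) : R :=
  sumR N (fun i => phi (x i) t).

Definition upd (x : nat -> R) (i : nat) (s : R) : nat -> R :=
  fun j => if Nat.eqb j i then s else x j.
Definition pxi (F : (nat -> R) -> R -> R) (i : nat) : (nat -> R) -> R -> R :=
  fun x t => Derive (fun s => F (upd x i s) t) (x i).
Definition pt (F : (nat -> R) -> R -> R) : (nat -> R) -> R -> R :=
  fun x t => Derive (fun s => F x s) t.

(* nabla^2 F (x,t) [(a,at),(a,at)] = a^T H a with H the (N+1)x(N+1) Hessian *)
Definition hess_form (N : nat) (F : (nat -> R) -> R -> R) (x : nat -> R) (t : R)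
    (a : nat -> R) (at_ : R) : R :=
  sumR N (fun i => sumR N (fun j => a i * pxi (pxi F j) i x t * a j))
  + sumR N (fun i => a i * pxi (pt F) i x t * at_)
  + sumR N (fun j => at_ * pt (pxi F j) x t * a j)
  + at_ * pt (pt F) x t * at_.

Definition logPhi (N : nat) (phi : R -> R -> R) : (nat -> R) -> R -> R :=
  fun x t => ln (Phi N phi x t).

From Stdlib Require Import Reals Lra Lia FunctionalExtensionality Classical.
From Coquelicot Require Import Coquelicot.
Open Scope R_scope.

(* Restrict log Phi to the segment: g(u) = log Phi(x + u Dx, t + u Dt).  Taylor's
   theorem with Lagrange remainder gives g(1) - g(0) = g'(0) + g''(u)/2, and g''(u) is
   the Hessian form of log Phi at the intermediate point.  In
   g'(0) = (sum_i Dx_i d_y phi(x_i,t) + Dt sum_i d_t phi(x_i,t)) / Phi(x,t) the first sum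
   vanishes because p is proportional to d_y phi(x_i,t) and sums to 1, so Dx is orthogonal
   to it; the heat equation turns the second into -Dt sum_i d_yy phi(x_i,t) / 2. *)

Lemma differentiable_pt_lim_dy_dt f y s : differentiable_pt f y s ->
  differentiable_pt_lim f y s (dy f y s) (dt f y s).
Proof.
  intros [lx [ly H]].
  destruct (differentiable_pt_lim_unique _ _ _ _ _ H) as [Hx Hy].
  unfold dy, dt; rewrite Hx, Hy; exact H.
Qed.

Lemma is_derive_comp_2d f (X T : R -> R) u a b :
  differentiable_pt f (X u) (T u) -> is_derive X u a -> is_derive T u b ->
  is_derive (fun v => f (X v) (T v)) u (a * dy f (X u) (T u) + b * dt f (X u) (T u)).
Proof.
  intros Hf HX HT. apply is_derive_Reals.
  rewrite (Rmult_comm a), (Rmult_comm b).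
  apply derivable_pt_lim_comp_2d;
    [apply differentiable_pt_lim_dy_dt | apply is_derive_Reals | apply is_derive_Reals];
    assumption.
Qed.

Lemma is_derive_dy f y s : differentiable_pt f y s -> is_derive (fun u => f u s) y (dy f y s).
Proof.
  intros H. replace (dy f y s) with (1 * dy f y s + 0 * dt f y s) by ring.
  apply (is_derive_comp_2d f (fun u => u) (fun _ => s)); [exact H | |]; auto_derive; auto.
Qed.

Lemma is_derive_dt f y s : differentiable_pt f y s -> is_derive (fun u => f y u) s (dt f y s).
Proof.
  intros H. replace (dt f y s) with (0 * dy f y s + 1 * dt f y s) by ring.
  apply (is_derive_comp_2d f (fun _ => y) (fun u => u)); [exact H | |]; auto_derive; auto.
Qed.

Lemma is_derive_along_line f y a s b u : differentiable_pt f (y + u * a) (s + u * b) ->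
  is_derive (fun v => f (y + v * a) (s + v * b)) u
    (a * dy f (y + u * a) (s + u * b) + b * dt f (y + u * a) (s + u * b)).
Proof.
  intros H. apply (is_derive_comp_2d f (fun v => y + v * a) (fun v => s + v * b)); [exact H | |];
    auto_derive; auto; ring.
Qed.

Lemma sumR_ext N f g : (forall k, (k < N)%nat -> f k = g k) -> sumR N f = sumR N g.
Proof.
  induction N as [|N IH]; simpl; intros H; [reflexivity|].
  rewrite IH by (intros; apply H; lia).
  rewrite (H N) by lia; reflexivity.
Qed.

Lemma sumR_plus N f g : sumR N (fun k => f k + g k) = sumR N f + sumR N g.
Proof. induction N as [|N IH]; simpl; [ring | rewrite IH; ring]. Qed.

Lemma sumR_scal N c f : sumR N (fun k => c * f k) = c * sumR N f.
Proof. induction N as [|N IH]; simpl; [ring | rewrite IH; ring]. Qed.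

Lemma sumR_kronecker N i c : (i < N)%nat ->
  sumR N (fun k => if Nat.eqb k i then c else 0) = c.
Proof.
  induction N as [|N IH]; intros Hi; [lia|]; simpl.
  destruct (Nat.eqb_spec N i) as [<-|Hne].
  - rewrite (sumR_ext _ _ (fun _ => 0 * 0)), sumR_scal; [ring|].
    intros k Hk; destruct (Nat.eqb_spec k N); [lia | ring].
  - rewrite IH by lia; ring.
Qed.

Lemma sumR_pos N f : (1 <= N)%nat -> (forall k, (k < N)%nat -> 0 < f k) -> 0 < sumR N f.
Proof.
  induction N as [|[|N] IH]; intros HN H; [lia | |].
  - simpl; assert (0 < f 0%nat) by (apply H; lia); lra.
  - change (0 < sumR (S N) f + f (S N)).
    assert (0 < sumR (S N) f) by (apply IH; [lia | intros; apply H; lia]).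
    assert (0 < f (S N)) by (apply H; lia); lra.
Qed.

Lemma is_derive_sumR N (F : nat -> R -> R) F' s :
  (forall k, (k < N)%nat -> is_derive (F k) s (F' k)) ->
  is_derive (fun s => sumR N (fun k => F k s)) s (sumR N F').
Proof.
  induction N as [|N IH]; simpl; intros H.
  - apply (is_derive_const 0 s).
  - apply (is_derive_plus (fun s => sumR N (fun k => F k s)) (F N));
      [apply IH; intros | apply H]; auto; lia.
Qed.

Lemma is_derive_sumR_upd N f z i y s : (i < N)%nat -> differentiable_pt f y s ->
  is_derive (fun u => sumR N (fun k => f (upd z i u k) s)) y (dy f y s).
Proof.
  intros Hi Hd. rewrite <- (sumR_kronecker N i (dy f y s) Hi).
  apply (is_derive_sumR N (fun k u => f (upd z i u k) s)).
  intros k _; unfold upd; destruct (Nat.eqb k i).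
  - apply is_derive_dy, Hd.
  - apply (is_derive_const (f (z k) s) y).
Qed.

Lemma sumR_centered_orthogonal N (p l Y : nat -> R) : sumR N p = 1 ->
  ((exists i, (i < N)%nat /\ Y i <> 0) -> exists c, forall i, (i < N)%nat -> p i = c * Y i) ->
  sumR N (fun k => (sumR N (fun j => p j * l j) - l k) * Y k) = 0.
Proof.
  intros Hp Hprop. set (L := sumR N (fun j => p j * l j)).
  destruct (classic (exists i, (i < N)%nat /\ Y i <> 0)) as [HY|HY].
  - destruct (Hprop HY) as [c Hc].
    assert (HcY : c * sumR N Y = 1).
    { rewrite <- sumR_scal, <- Hp; apply sumR_ext; intros; rewrite Hc; auto. }
    assert (HL : L = c * sumR N (fun k => l k * Y k)).
    { unfold L; rewrite <- sumR_scal; apply sumR_ext; intros; rewrite Hc; auto; ring. }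
    rewrite (sumR_ext _ _ (fun k => L * Y k + (-1) * (l k * Y k))) by (intros; ring).
    rewrite sumR_plus, !sumR_scal, HL.
    transitivity ((c * sumR N Y - 1) * sumR N (fun k => l k * Y k)); [ring|].
    rewrite HcY; ring.
  - rewrite (sumR_ext _ _ (fun _ => 0 * 0)), sumR_scal; [ring|].
    intros k Hk; replace (Y k) with 0; [ring|].
    apply NNPP; intro; apply HY; exists k; auto.
Qed.

Lemma is_derive_ln_comp g u dg : 0 < g u -> is_derive g u dg ->
  is_derive (fun v => ln (g v)) u (dg / g u).
Proof.
  intros Hpos Hg.
  replace (dg / g u) with (scal dg (/ g u)) by (unfold scal; simpl; unfold mult; simpl; field; lra).
  exact (is_derive_comp ln g u _ _ (is_derive_ln _ Hpos) Hg).
Qed.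

Lemma taylor_lagrange_order2 (g g1 g2 : R -> R) c : c < 0 ->
  (forall u, c < u -> is_derive g u (g1 u)) ->
  (forall u, c < u -> is_derive g1 u (g2 u)) ->
  exists z, 0 < z < 1 /\ g 1 - g 0 = g1 0 + g2 z / 2.
Proof.
  intros Hc Hg Hg1.
  assert (Hg' : forall u, c < u -> Derive g u = g1 u) by (intros; apply is_derive_unique, Hg; auto).
  assert (Hg'' : forall u, c < u -> Derive_n g 2 u = g2 u).
  { intros u Hu; simpl.
    rewrite (Derive_ext_loc _ g1 u); [apply is_derive_unique, Hg1; auto |].
    apply (filter_imp (fun v => c < v)); [exact Hg' | apply (open_gt c); exact Hu]. }
  destruct (Taylor_Lagrange g 1 0 1 Rlt_0_1) as [z [Hz Htaylor]].
  - intros u Hu [|[|[|k]]] Hk; simpl.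
    + exact I.
    + exists (g1 u); apply Hg; lra.
    + exists (g2 u). apply (is_derive_ext_loc g1); [| apply Hg1; lra].
      apply (filter_imp (fun v => c < v)); [| apply (open_gt c); lra].
      intros v Hv; symmetry; apply Hg'; exact Hv.
    + lia.
  - exists z; split; [exact Hz |].
    rewrite Htaylor, Hg'' by lra; simpl.
    rewrite Hg' by lra. field.
Qed.

Lemma line_time_pos s b u : 0 < s -> 0 <= b -> - s / (b + 1) < u -> 0 < s + u * b.
Proof.
  intros Hs Hb Hu.
  assert (Hu' : - s < u * (b + 1)).
  { apply (Rmult_lt_compat_r (b + 1)) in Hu; [| lra].
    unfold Rdiv in Hu; rewrite Rmult_assoc, Rinv_l in Hu; lra. }
  destruct (Rle_lt_dec 0 u); nra.
Qed.

Lemma upd_same z i : upd z i (z i) = z.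
Proof.
  apply functional_extensionality; intros k; unfold upd.
  destruct (Nat.eqb_spec k i) as [->|]; reflexivity.
Qed.

Section TotalPotential.

Variables (phi : R -> R -> R) (N : nat).
Hypothesis N_pos : (1 <= N)%nat.
Hypothesis phi_pos : forall y s, 0 < s -> 0 < phi y s.
Hypothesis phi_diff : forall y s, 0 < s -> differentiable_pt phi y s.
Hypothesis dy_phi_diff : forall y s, 0 < s -> differentiable_pt (dy phi) y s.
Hypothesis dt_phi_diff : forall y s, 0 < s -> differentiable_pt (dt phi) y s.

Definition Phi_t (z : nat -> R) (s : R) : R := sumR N (fun k => dt phi (z k) s).

Definition dPhi_dir (a : nat -> R) (b : R) (z : nat -> R) (s : R) : R :=
  sumR N (fun k => a k * dy phi (z k) s + b * dt phi (z k) s).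

Definition d2Phi_dir (a : nat -> R) (b : R) (z : nat -> R) (s : R) : R :=
  sumR N (fun k => a k * (a k * dy (dy phi) (z k) s + b * dt (dy phi) (z k) s)
                 + b * (a k * dy (dt phi) (z k) s + b * dt (dt phi) (z k) s)).

Lemma Phi_pos z s : 0 < s -> 0 < Phi N phi z s.
Proof. intros Hs; apply sumR_pos; auto. Qed.

Lemma is_derive_Phi_upd z i s : (i < N)%nat -> 0 < s ->
  is_derive (fun u => Phi N phi (upd z i u) s) (z i) (dy phi (z i) s).
Proof. intros Hi Hs; apply is_derive_sumR_upd; auto. Qed.

Lemma is_derive_Phi_t z s : 0 < s -> is_derive (fun u => Phi N phi z u) s (Phi_t z s).
Proof.
  intros Hs; apply (is_derive_sumR N (fun k u => phi (z k) u)).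
  intros k _; apply is_derive_dt; auto.
Qed.

Lemma is_derive_Phi_t_t z s : 0 < s ->
  is_derive (fun u => Phi_t z u) s (sumR N (fun k => dt (dt phi) (z k) s)).
Proof.
  intros Hs; apply (is_derive_sumR N (fun k u => dt phi (z k) u)).
  intros k _; apply is_derive_dt; auto.
Qed.

Lemma is_derive_Phi_t_upd z i s : (i < N)%nat -> 0 < s ->
  is_derive (fun u => Phi_t (upd z i u) s) (z i) (dy (dt phi) (z i) s).
Proof. intros Hi Hs; apply (is_derive_sumR_upd N (dt phi)); auto. Qed.

Lemma pxi_logPhi z s i : (i < N)%nat -> 0 < s ->
  pxi (logPhi N phi) i z s = dy phi (z i) s / Phi N phi z s.
Proof.
  intros Hi Hs; unfold pxi, logPhi; apply is_derive_unique.
  pose proof (is_derive_ln_comp (fun u => Phi N phi (upd z i u) s) (z i) (dy phi (z i) s)) as H.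
  cbv beta in H; rewrite upd_same in H.
  apply H; [apply Phi_pos | apply is_derive_Phi_upd]; auto.
Qed.

Lemma pt_logPhi z s : 0 < s -> pt (logPhi N phi) z s = Phi_t z s / Phi N phi z s.
Proof.
  intros Hs; unfold pt, logPhi; apply is_derive_unique.
  apply (is_derive_ln_comp (fun u => Phi N phi z u));
    [apply Phi_pos | apply is_derive_Phi_t]; auto.
Qed.

Lemma pxi_pxi_logPhi z s i j : (i < N)%nat -> (j < N)%nat -> 0 < s ->
  pxi (pxi (logPhi N phi) j) i z s =
  ((if Nat.eqb j i then dy (dy phi) (z i) s else 0) * Phi N phi z s
    - dy phi (z j) s * dy phi (z i) s) / Phi N phi z s ^ 2.
Proof.
  intros Hi Hj Hs; unfold pxi at 1.
  rewrite (Derive_ext _ (fun u => dy phi (upd z i u j) s / Phi N phi (upd z i u) s))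
    by (intros; apply pxi_logPhi; auto).
  apply is_derive_unique.
  assert (Hnum : is_derive (fun u => dy phi (upd z i u j) s) (z i)
                   (if Nat.eqb j i then dy (dy phi) (z i) s else 0)).
  { unfold upd; destruct (Nat.eqb j i);
      [apply is_derive_dy; auto | apply (is_derive_const (dy phi (z j) s))]. }
  pose proof (is_derive_div _ _ _ _ _ Hnum (is_derive_Phi_upd z i s Hi Hs)) as H.
  cbv beta in H; rewrite upd_same in H.
  apply H; apply Rgt_not_eq, Phi_pos; auto.
Qed.

Lemma pxi_pt_logPhi z s i : (i < N)%nat -> 0 < s ->
  pxi (pt (logPhi N phi)) i z s =
  (dy (dt phi) (z i) s * Phi N phi z s - Phi_t z s * dy phi (z i) s) / Phi N phi z s ^ 2.
Proof.
  intros Hi Hs; unfold pxi at 1.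
  rewrite (Derive_ext _ (fun u => Phi_t (upd z i u) s / Phi N phi (upd z i u) s))
    by (intros; apply pt_logPhi; auto).
  apply is_derive_unique.
  pose proof (is_derive_div _ _ _ _ _ (is_derive_Phi_t_upd z i s Hi Hs)
                (is_derive_Phi_upd z i s Hi Hs)) as H.
  cbv beta in H; rewrite upd_same in H.
  apply H; apply Rgt_not_eq, Phi_pos; auto.
Qed.

Lemma pt_pxi_logPhi z s j : (j < N)%nat -> 0 < s ->
  pt (pxi (logPhi N phi) j) z s =
  (dt (dy phi) (z j) s * Phi N phi z s - dy phi (z j) s * Phi_t z s) / Phi N phi z s ^ 2.
Proof.
  intros Hj Hs; unfold pt at 1.
  rewrite (Derive_ext_loc _ (fun u => dy phi (z j) u / Phi N phi z u) s).
  - apply is_derive_unique, is_derive_div;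
      [apply is_derive_dt | apply is_derive_Phi_t | apply Rgt_not_eq, Phi_pos]; auto.
  - apply (filter_imp (fun u => 0 < u)); [intros; apply pxi_logPhi; auto |].
    apply (open_gt 0); exact Hs.
Qed.

Lemma pt_pt_logPhi z s : 0 < s ->
  pt (pt (logPhi N phi)) z s =
  (sumR N (fun k => dt (dt phi) (z k) s) * Phi N phi z s - Phi_t z s * Phi_t z s)
    / Phi N phi z s ^ 2.
Proof.
  intros Hs; unfold pt at 1.
  rewrite (Derive_ext_loc _ (fun u => Phi_t z u / Phi N phi z u) s).
  - apply is_derive_unique, is_derive_div;
      [apply is_derive_Phi_t_t | apply is_derive_Phi_t | apply Rgt_not_eq, Phi_pos]; auto.
  - apply (filter_imp (fun u => 0 < u)); [intros; apply pt_logPhi; auto |].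
    apply (open_gt 0); exact Hs.
Qed.

Lemma sumR_hess_xx z s a : 0 < s ->
  sumR N (fun i => sumR N (fun j => a i * pxi (pxi (logPhi N phi) j) i z s * a j)) =
  sumR N (fun k => a k * (a k * dy (dy phi) (z k) s)) / Phi N phi z s
  - sumR N (fun k => a k * dy phi (z k) s) ^ 2 / Phi N phi z s ^ 2.
Proof.
  intros Hs. pose proof (Phi_pos z s Hs) as HP.
  set (P := Phi N phi z s) in *; set (SY := sumR N (fun k => a k * dy phi (z k) s)).
  rewrite (sumR_ext _ _ (fun i => / P * (a i * (a i * dy (dy phi) (z i) s))
                                 + (- (SY / P ^ 2)) * (a i * dy phi (z i) s))).
  { rewrite sumR_plus, !sumR_scal; fold SY; field; lra. }
  intros i Hi.
  rewrite (sumR_ext _ _ (fun j => (if Nat.eqb j i then a i * (a i * dy (dy phi) (z i) s) / P else 0)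
                                 + (- (a i * dy phi (z i) s / P ^ 2)) * (a j * dy phi (z j) s))).
  - rewrite sumR_plus, sumR_kronecker, sumR_scal by exact Hi; fold SY; field; lra.
  - intros j Hj; rewrite pxi_pxi_logPhi by auto; fold P.
    destruct (Nat.eqb_spec j i) as [->|]; field; lra.
Qed.

Lemma sumR_hess_xt z s a b : 0 < s ->
  sumR N (fun i => a i * pxi (pt (logPhi N phi)) i z s * b) =
  b * sumR N (fun k => a k * dy (dt phi) (z k) s) / Phi N phi z s
  - b * Phi_t z s * sumR N (fun k => a k * dy phi (z k) s) / Phi N phi z s ^ 2.
Proof.
  intros Hs. pose proof (Phi_pos z s Hs) as HP.
  rewrite (sumR_ext _ _ (fun i => (b / Phi N phi z s) * (a i * dy (dt phi) (z i) s)
             + (- (b * Phi_t z s / Phi N phi z s ^ 2)) * (a i * dy phi (z i) s))).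
  - rewrite sumR_plus, !sumR_scal; field; lra.
  - intros i Hi; rewrite pxi_pt_logPhi by auto; field; lra.
Qed.

Lemma sumR_hess_tx z s a b : 0 < s ->
  sumR N (fun j => b * pt (pxi (logPhi N phi) j) z s * a j) =
  b * sumR N (fun k => a k * dt (dy phi) (z k) s) / Phi N phi z s
  - b * Phi_t z s * sumR N (fun k => a k * dy phi (z k) s) / Phi N phi z s ^ 2.
Proof.
  intros Hs. pose proof (Phi_pos z s Hs) as HP.
  rewrite (sumR_ext _ _ (fun j => (b / Phi N phi z s) * (a j * dt (dy phi) (z j) s)
             + (- (b * Phi_t z s / Phi N phi z s ^ 2)) * (a j * dy phi (z j) s))).
  - rewrite sumR_plus, !sumR_scal; field; lra.
  - intros j Hj; rewrite pt_pxi_logPhi by auto; field; lra.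
Qed.

Lemma hess_form_logPhi z s a b : 0 < s ->
  hess_form N (logPhi N phi) z s a b =
  (d2Phi_dir a b z s * Phi N phi z s - dPhi_dir a b z s ^ 2) / Phi N phi z s ^ 2.
Proof.
  intros Hs. pose proof (Phi_pos z s Hs) as HP.
  unfold hess_form, d2Phi_dir, dPhi_dir.
  rewrite sumR_hess_xx, sumR_hess_xt, sumR_hess_tx, pt_pt_logPhi by exact Hs.
  rewrite (sumR_ext N (fun k => a k * (a k * dy (dy phi) (z k) s + b * dt (dy phi) (z k) s)
                              + b * (a k * dy (dt phi) (z k) s + b * dt (dt phi) (z k) s))
     (fun k => (a k * (a k * dy (dy phi) (z k) s) + b * (a k * dt (dy phi) (z k) s))
             + (b * (a k * dy (dt phi) (z k) s) + (b * b) * dt (dt phi) (z k) s)))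
    by (intros; ring).
  rewrite !sumR_plus, !sumR_scal; unfold Phi_t. field; lra.
Qed.

Lemma is_derive_Phi_line z a s b u : 0 < s + u * b ->
  is_derive (fun v => Phi N phi (fun k => z k + v * a k) (s + v * b)) u
    (dPhi_dir a b (fun k => z k + u * a k) (s + u * b)).
Proof.
  intros Hs; apply (is_derive_sumR N (fun k v => phi (z k + v * a k) (s + v * b))).
  intros k _; apply is_derive_along_line; auto.
Qed.

Lemma is_derive_dPhi_dir_line z a s b u : 0 < s + u * b ->
  is_derive (fun v => dPhi_dir a b (fun k => z k + v * a k) (s + v * b)) u
    (d2Phi_dir a b (fun k => z k + u * a k) (s + u * b)).
Proof.
  intros Hs; apply (is_derive_sumR N (fun k v => a k * dy phi (z k + v * a k) (s + v * b)
                                               + b * dt phi (z k + v * a k) (s + v * b))).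
  intros k _.
  apply (is_derive_plus (fun v => a k * dy phi (z k + v * a k) (s + v * b))
                        (fun v => b * dt phi (z k + v * a k) (s + v * b)));
    apply is_derive_scal, is_derive_along_line; auto.
Qed.

Lemma is_derive_logPhi_line z a s b u : 0 < s + u * b ->
  is_derive (fun v => logPhi N phi (fun k => z k + v * a k) (s + v * b)) u
    (dPhi_dir a b (fun k => z k + u * a k) (s + u * b)
       / Phi N phi (fun k => z k + u * a k) (s + u * b)).
Proof.
  intros Hs.
  apply (is_derive_ln_comp (fun v => Phi N phi (fun k => z k + v * a k) (s + v * b)));
    [apply Phi_pos | apply is_derive_Phi_line]; auto.
Qed.

Lemma is_derive_logPhi_line_slope z a s b u : 0 < s + u * b ->
  is_derive (fun v => dPhi_dir a b (fun k => z k + v * a k) (s + v * b)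
                        / Phi N phi (fun k => z k + v * a k) (s + v * b)) u
    (hess_form N (logPhi N phi) (fun k => z k + u * a k) (s + u * b) a b).
Proof.
  intros Hs; rewrite hess_form_logPhi by exact Hs.
  replace (dPhi_dir a b (fun k => z k + u * a k) (s + u * b) ^ 2)
    with (dPhi_dir a b (fun k => z k + u * a k) (s + u * b)
          * dPhi_dir a b (fun k => z k + u * a k) (s + u * b)) by ring.
  apply (is_derive_div (fun v => dPhi_dir a b (fun k => z k + v * a k) (s + v * b))
                       (fun v => Phi N phi (fun k => z k + v * a k) (s + v * b)));
    [apply is_derive_dPhi_dir_line | apply is_derive_Phi_line
                       | apply Rgt_not_eq, Phi_pos]; auto.
Qed.

Lemma logPhi_taylor_segment z a s b : 0 < s -> 0 <= b ->
  exists u, 0 < u < 1 /\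
    logPhi N phi (fun k => z k + a k) (s + b) - logPhi N phi z s =
    dPhi_dir a b z s / Phi N phi z s
    + / 2 * hess_form N (logPhi N phi) (fun k => z k + u * a k) (s + u * b) a b.
Proof.
  intros Hs Hb.
  assert (Hc : - s / (b + 1) < 0).
  { unfold Rdiv; rewrite <- Ropp_mult_distr_l.
    apply Ropp_lt_gt_0_contravar, Rdiv_lt_0_compat; lra. }
  destruct (taylor_lagrange_order2 _ _ _ _ Hc
              (fun u Hu => is_derive_logPhi_line z a s b u (line_time_pos s b u Hs Hb Hu))
              (fun u Hu => is_derive_logPhi_line_slope z a s b u (line_time_pos s b u Hs Hb Hu)))
    as [u [Hu Htaylor]].
  cbv beta in Htaylor.
  replace (fun k => z k + 0 * a k) with z in Htaylor
    by (apply functional_extensionality; intro; ring).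
  replace (s + 0 * b) with s in Htaylor by ring.
  exists u; split; [exact Hu |].
  replace (fun k => z k + a k) with (fun k => z k + 1 * a k)
    by (apply functional_extensionality; intro; ring).
  replace (s + b) with (s + 1 * b) by ring.
  rewrite Htaylor; unfold Rdiv; ring.
Qed.

End TotalPotential.

Lemma dPhi_dir_centered_heat phi N z s p l b :
  (forall k, (k < N)%nat -> dt phi (z k) s = - / 2 * dy (dy phi) (z k) s) ->
  sumR N p = 1 ->
  ((exists i, (i < N)%nat /\ dy phi (z i) s <> 0) ->
     exists c, forall i, (i < N)%nat -> p i = c * dy phi (z i) s) ->
  dPhi_dir phi N (fun i => sumR N (fun j => p j * l j) - l i) b z s
  = - (sumR N (fun i => dy (dy phi) (z i) s) * b) / 2.
Proof.
  intros Hheat Hp Hprop; unfold dPhi_dir.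
  rewrite (sumR_ext _ _ (fun k => 1 * ((sumR N (fun j => p j * l j) - l k) * dy phi (z k) s)
                                  + (- b / 2) * dy (dy phi) (z k) s))
    by (intros; rewrite Hheat by assumption; field).
  rewrite sumR_plus, !sumR_scal, sumR_centered_orthogonal by assumption; field.
Qed.

Lemma solve_balance_for_Dt P Y H Dt : 0 < P -> Y <> 0 ->
  0 = - (Y * Dt) / (2 * P) + / 2 * H -> Dt = P * H / Y.
Proof.
  intros HP HY Hbal.
  assert (HYDt : Y * Dt = P * H).
  { replace (Y * Dt) with (2 * P * (Y * Dt / (2 * P))) by (field; lra).
    replace (Y * Dt / (2 * P)) with (/ 2 * H) by lra.
    field. }
  rewrite <- HYDt; field; exact HY.
Qed.

Theorem lemma6p3 (D : option R) (phi : R -> R -> R) (N : nat)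
  (x : nat -> R) (t : R) (p l : nat -> R) (Dt : R) :
  good_potential D phi ->
  (forall y s, 0 <= s -> 0 < phi y s) ->
  (1 <= N)%nat ->
  (forall i, (i < N)%nat -> inD D (x i)) ->
  0 < t ->
  (forall i, (i < N)%nat -> 0 <= p i) ->
  sumR N p = 1 ->
  ((exists i, (i < N)%nat /\ dy phi (x i) t <> 0) ->
     exists c, forall i, (i < N)%nat -> p i = c * dy phi (x i) t) ->
  0 <= Dt ->
  let Dx := fun i => sumR N (fun j => p j * l j) - l i in
  let x' := fun i => x i + Dx i in
  let t' := t + Dt in
  exists s, 0 <= s <= 1 /\
    let xb := fun i => x i + s * Dx i in
    let tb := t + s * Dt in
    logPhi N phi x' t' - logPhi N phi x t
      = - (sumR N (fun i => dy (dy phi) (x i) t) * Dt) / (2 * Phi N phi x t)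
        + / 2 * hess_form N (logPhi N phi) xb tb Dx Dt
    /\ (logPhi N phi x' t' = logPhi N phi x t ->
        sumR N (fun i => dy (dy phi) (x i) t) <> 0 ->
        Dt = Phi N phi x t * hess_form N (logPhi N phi) xb tb Dx Dt
             / sumR N (fun i => dy (dy phi) (x i) t)).
Proof.
  intros Hgood Hpos HN _ Ht _ Hp Hprop HDt Dx x' t'.
  destruct Hgood as [_ [Hdiff [_ [_ [_ [_ Hheat]]]]]].
  assert (HPhi : 0 < Phi N phi x t) by (apply sumR_pos; auto; intros; apply Hpos; lra).
  destruct (logPhi_taylor_segment phi N HN (fun y s Hs => Hpos y s (Rlt_le _ _ Hs))
              (fun y s Hs => proj1 (Hdiff y s Hs))
              (fun y s Hs => proj1 (proj2 (Hdiff y s Hs)))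
              (fun y s Hs => proj1 (proj2 (proj2 (Hdiff y s Hs))))
              x Dx t Dt Ht HDt) as [s [Hs Htaylor]].
  assert (Hslope : dPhi_dir phi N Dx Dt x t
                   = - (sumR N (fun i => dy (dy phi) (x i) t) * Dt) / 2)
    by (apply dPhi_dir_centered_heat; auto; intros; apply Hheat, Ht).
  rewrite Hslope in Htaylor.
  exists s; split; [lra |]; intros xb tb.
  assert (Hmain : logPhi N phi x' t' - logPhi N phi x t
      = - (sumR N (fun i => dy (dy phi) (x i) t) * Dt) / (2 * Phi N phi x t)
        + / 2 * hess_form N (logPhi N phi) xb tb Dx Dt).
  { unfold x', t', xb, tb; rewrite Htaylor; field; lra. }
  split; [exact Hmain |].
  intros Heq HY; rewrite Heq, Rminus_diag in Hmain.
  apply solve_balance_for_Dt; assumption.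
Qed.
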